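(* Let $p/q$ (in lowest terms, $q>0$) be a convergent of the simple continued fraction expansion of $e$. If $q=(n!)^k$ for some integer $n\ge 0$ and some integer $k>0$, then $n/k<e$.
   Context: The convergents of $e$ are the rationals obtained by truncating the simple continued fraction expansion of $e$; they begin $2/1,3/1,8/3,11/4,19/7,87/32,\dots$. *)

From HB Require Import structures.
From mathcomp Require Import all_boot all_order all_algebra.
From mathcomp Require Import all_classical all_reals all_analysis.
Set Implicit Arguments. Unset Strict Implicit. Unset Printing Implicit Defensive.
Import Order.TTheory GRing.Theory Num.Theory.
Local Open Scope ring_scope.

Fixpoint cf_rem (R : realType) (x : R) (i : nat) : R :=
  match i with
  | 0%N => x
  | i'.+1 => (cf_rem x i' - (Num.floor (cf_rem x i'))%:~R)^-1
  end.

Definition cf_pq (R : realType) (x : R) (i : nat) : int := Num.floor (cf_rem x i).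

Fixpoint cfrac (s : seq int) : rat :=
  match s with
  | [::] => 0
  | [:: a] => a%:~R
  | a :: t => a%:~R + (cfrac t)^-1
  end.

Definition convergent (R : realType) (x : R) (m : nat) : rat :=
  cfrac [seq cf_pq x i | i <- iota 0 m.+1].

From HB Require Import structures.
From mathcomp Require Import all_boot all_order all_algebra.
From mathcomp Require Import all_classical all_reals all_analysis.
From mathcomp Require Import ring lra zify.
Import Order.TTheory GRing.Theory Num.Theory.
Local Open Scope ring_scope.

(* Suppose n/k >= e; put q = (n!)^k and M = nk, and let p/q be the convergent.
   Convergents satisfy |q e - p| < 1/q and q divides M!, so M! e lies within
   M!/q^2 of an integer.  But M! e is at distance more than 1/(M+1) from every
   integer, its fractional part being the tail \sum_{j>M} M!/j!; hence
   q^2 < (M+1)!.  On the other hand (nk)! <= k^(nk) (n!)^k, and n/k >= e gives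
   n! >= n k^(n-1), whence (nk+1) k^(nk) <= (n!)^k and (M+1)! <= q^2. *)

Section FactorialBounds.
Local Open Scope nat_scope.

Lemma bin_mul_expnn_le a b : 'C(a + b, b) * (a ^ a * b ^ b) <= (a + b) ^ (a + b).
Proof.
have ltb : b < (a + b).+1 by rewrite ltnS leq_addl.
by rewrite expnDn (bigD1 (Ordinal ltb)) //= addnK leq_addr.
Qed.

Lemma expn_fact_dvd_fact_mul n k : n`! ^ k %| (n * k)`!.
Proof.
elim: k => [|k IHk]; first by rewrite muln0.
rewrite mulnS addnC -(bin_fact (leq_addl (n * k) n)) addnK expnS.
by rewrite dvdn_mull // dvdn_mul.
Qed.

Lemma bin_mul_expn_le n k : 0 < n ->
  'C(n * k + n, n) * k ^ (n * k) <= k.+1 ^ (n * k + n).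
Proof.
move=> n_gt0; have := bin_mul_expnn_le (n * k) n.
have -> : (n * k) ^ (n * k) * n ^ n = k ^ (n * k) * n ^ (n * k + n).
  by rewrite expnMn expnD mulnA [k ^ _ * _]mulnC.
have -> : (n * k + n) ^ (n * k + n) = k.+1 ^ (n * k + n) * n ^ (n * k + n).
  by rewrite -expnMn; congr (_ ^ _); lia.
by rewrite mulnA leq_pmul2r // expn_gt0 n_gt0.
Qed.

Lemma fact_mul_le n k : 0 < n -> (n * k)`! <= k ^ (n * k) * n`! ^ k.
Proof.
move=> n_gt0; elim: k => [|k IHk]; first by rewrite muln0.
rewrite mulnS addnC -(bin_fact (leq_addl (n * k) n)) addnK.
have IHk' : n`! * (n * k)`! <= k ^ (n * k) * (n`! * n`! ^ k).
  by rewrite mulnCA leq_mul2l IHk orbT.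
apply: leq_trans (leq_mul (leqnn _) IHk') _.
by rewrite mulnA expnS leq_mul2r bin_mul_expn_le ?orbT.
Qed.

Lemma fact_mul_expS_le M j : M`! * M.+1 ^ j.+1 <= (M.+1 + j)`!.
Proof.
elim: j => [|j IHj]; first by rewrite addn0 expn1 factS mulnC.
rewrite addnS factS expnS mulnCA leq_mul //; lia.
Qed.

Lemma fact_expn_lower_from k n0 :
  (n0 * k).+1 * k ^ (n0 * k) <= n0`! ^ k ->
  (forall i, n0 <= i -> (i.+1 * k).+1 * k ^ k <= i.+1 ^ k * (i * k).+1) ->
  forall n, n0 <= n -> (n * k).+1 * k ^ (n * k) <= n`! ^ k.
Proof.
move=> base step; elim=> [|n IHn]; first by rewrite leqn0 => /eqP <-.
rewrite leq_eqVlt => /orP [/eqP <- // | ]; rewrite ltnS => le_n0n.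
have -> : k ^ (n.+1 * k) = k ^ k * k ^ (n * k) by rewrite mulSn expnD.
rewrite mulnA factS expnMn.
apply: (@leq_trans (n.+1 ^ k * (n * k).+1 * k ^ (n * k))).
  by rewrite leq_mul2r step ?orbT.
by rewrite -mulnA leq_mul2l IHn ?orbT.
Qed.

End FactorialBounds.

Section ContinuedFraction.
Variable R : realType.
Implicit Types x : R.

Lemma irrational_neq_ratr {x} (r : rat) : irrational x -> x != ratr r.
Proof. by move=> x_irr; apply/eqP => xr; apply: x_irr; exists r. Qed.

Lemma irrational_floor_lt {x} : irrational x ->
  (Num.floor x)%:~R < x < (Num.floor x)%:~R + 1.
Proof.
move=> x_irr; have /andP[le_fx lt_xf] := floor_itv x.
rewrite -intrD1 lt_xf andbT lt_def le_fx andbT.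
by have := irrational_neq_ratr (Num.floor x)%:~R x_irr; rewrite rmorph_int eq_sym.
Qed.

Lemma irrational_cf_rem {x} i : irrational x -> irrational (cf_rem x i).
Proof.
move=> x_irr; elim: i => [//|i IHi] [r _ rE] /=; apply: IHi.
exists (r^-1 + (Num.floor (cf_rem x i))%:~R) => //.
by rewrite rmorphD fmorphV rmorph_int /= rE invrK subrK.
Qed.

Lemma cf_rem1_gt1 {x} : irrational x -> 1 < cf_rem x 1.
Proof.
move=> /irrational_floor_lt /andP[lt_fx lt_xf] /=.
by rewrite invf_gt1 ?subr_gt0 // ltrBlDl.
Qed.

Lemma cf_remS x i : cf_rem x i.+1 = cf_rem (cf_rem x 1) i.
Proof.
elim: i => [//|i IHi].
by rewrite -[LHS]/((cf_rem x i.+1 - (Num.floor (cf_rem x i.+1))%:~R)^-1) IHi.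
Qed.

Lemma convergentS x m :
  convergent x m.+1 = (cf_pq x 0)%:~R + (convergent (cf_rem x 1) m)^-1.
Proof.
rewrite /convergent -[iota 0 m.+2]/(0%N :: iota 1 m.+1) (iotaDl 1 0) map_cons -map_comp.
rewrite (@eq_map _ _ (cf_pq x \o addn 1) (cf_pq (cf_rem x 1))) //.
by move=> i; rewrite /= /cf_pq add1n cf_remS.
Qed.

(* [p/q] is the [m]-th convergent and [p'/q'] the previous one (with the
   convention [p_{-1}/q_{-1} = 1/0]); [x] is the Moebius image of its
   [(m+1)]-th complete quotient. *)
Definition cf_mobius x m (p q p' q' : int) : Prop :=
  [/\ 0 < q, 0 <= q', `|p * q' - p' * q| = 1, convergent x m = p%:~R / q%:~R
    & x = (p%:~R * cf_rem x m.+1 + p'%:~R) / (q%:~R * cf_rem x m.+1 + q'%:~R)].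

Lemma cf_mobius0 x : irrational x -> cf_mobius x 0 (Num.floor x) 1 1 0.
Proof.
move=> x_irr; have /andP[lt_fx _] := irrational_floor_lt x_irr.
split => //; first by rewrite mulr0 sub0r mulr1 normrN.
  by rewrite /convergent /= /cf_pq divr1.
rewrite [cf_rem x 1]/=; field.
by rewrite subr_eq0 gt_eqF.
Qed.

Lemma cf_mobiusS x m (P Q P' Q' : int) : irrational x -> 1 <= P -> 0 <= P' ->
  cf_mobius (cf_rem x 1) m P Q P' Q' ->
  let a := cf_pq x 0 in cf_mobius x m.+1 (a * P + Q) P (a * P' + Q') P'.
Proof.
move=> x_irr P_ge1 P'_ge0 [Q_gt0 Q'_ge0 det convE x1E] a.
have P_gt0 : (0 : R) < P%:~R by rewrite ltr0z (lt_le_trans ltr01).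
have P'_ge0R : (0 : R) <= P'%:~R by rewrite ler0z.
have Q_gt0R : (0 : R) < Q%:~R by rewrite ltr0z.
have Q'_ge0R : (0 : R) <= Q'%:~R by rewrite ler0z.
set y := cf_rem (cf_rem x 1) m.+1 in x1E.
have y_gt1 : 1 < y by apply/cf_rem1_gt1/irrational_cf_rem/irrational_cf_rem.
split => //.
- by rewrite -det -normrN; congr `|_|; ring.
- rewrite convergentS convE invf_div rmorphD rmorphM /=; field.
  by rewrite intr_eq0 gt_eqF // (lt_le_trans ltr01).
- have xE : x = a%:~R + (cf_rem x 1)^-1.
    by rewrite [cf_rem x 1]/= invrK /a /cf_pq /=; ring.
  rewrite cf_remS -/y {1}xE x1E invf_div !rmorphD !rmorphM /=.
  by field; rewrite !gt_eqF //; nra.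
Qed.

Lemma cf_mobius_exists m x : irrational x -> exists p q p' q' : int,
  cf_mobius x m p q p' q' /\ (1 <= x -> 1 <= p /\ 0 <= p').
Proof.
elim: m x => [|m IHm] x x_irr.
  exists (Num.floor x), 1, 1, 0; split; first exact: cf_mobius0.
  by move=> x_ge1; rewrite floor_ge_int.
have x1_irr := irrational_cf_rem 1 x_irr.
have [P [Q [P' [Q' [cfm pos]]]]] := IHm _ x1_irr.
have [P_ge1 P'_ge0] := pos (ltW (cf_rem1_gt1 x_irr)).
exists (cf_pq x 0 * P + Q), P, (cf_pq x 0 * P' + Q'), P'.
split; first exact: cf_mobiusS.
move=> x_ge1; have a_ge1 : 1 <= cf_pq x 0 by rewrite /cf_pq floor_ge_int.
case: cfm => Q_gt0 Q'_ge0 _ _ _; split; nia.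
Qed.

Lemma convergent_approx m x : irrational x -> exists p q : int,
  [/\ 0 < q, denq (convergent x m) = q & `|q%:~R * x - p%:~R| < (q%:~R)^-1].
Proof.
move=> x_irr; have [p [q [p' [q' [[q_gt0 q'_ge0 det convE xE] _]]]]] :=
  cf_mobius_exists m x x_irr.
exists p, q; split => //.
  rewrite convE coprimeq_den ?gt_eqF ?gtr0_norm //.
  rewrite -coprimezE; apply/coprimezP.
  case: (ler0P (p * q' - p' * q)) det => _ det.
    by exists (- q', p'); rewrite /= -det; ring.
  by exists (q', - p'); rewrite /= -det; ring.
set y := cf_rem x m.+1 in xE.
have y_gt1 : 1 < y by apply/cf_rem1_gt1/irrational_cf_rem.
have q_ge1 : (1 : R) <= q%:~R by rewrite ler1z.
have q'_ge0R : (0 : R) <= q'%:~R by rewrite ler0z.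
have den_gt0 : 0 < q%:~R * y + q'%:~R by nra.
have -> : q%:~R * x - p%:~R = (p' * q - p * q')%:~R / (q%:~R * y + q'%:~R).
  by rewrite xE rmorphB !rmorphM /=; field; rewrite gt_eqF.
rewrite normrM normfV (gtr0_norm den_gt0) -intr_norm.
rewrite (_ : `|p' * q - p * q'| = 1); last by rewrite -det -normrN; congr `|_|; ring.
by rewrite mul1r ltf_pV2 ?posrE ?(lt_le_trans ltr01) //; nra.
Qed.

End ContinuedFraction.

Lemma lt_dist_int (R : realDomainType) (x a : R) (N z : int) : 0 <= a ->
  N%:~R + a < x < N%:~R + 1 - a -> a < `|x - z%:~R|.
Proof.
move=> a_ge0 /andP[lo up]; have [le_zN | lt_Nz] := lerP z N.
  have le_zN_R : z%:~R <= N%:~R :> R by rewrite ler_int.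
  by rewrite ger0_norm; lra.
have lt_Nz_R : N%:~R + 1 <= z%:~R :> R by rewrite -intrD1 ler_int; lia.
by rewrite ler0_norm; lra.
Qed.

Section ExpOne.
Variable R : realType.

Lemma series_exp_coeff1 n :
  series (exp_coeff (1 : R)) n = \sum_(0 <= j < n) (j`!%:R)^-1.
Proof. by apply: eq_bigr => j _; rewrite /exp_coeff /= expr1n div1r. Qed.

Lemma sum_inv_fact_le_expR1 M : \sum_(0 <= j < M) (j`!%:R : R)^-1 <= expR 1.
Proof.
apply: limr_ge; first exact: is_cvg_series_exp_coeff.
exists M => // n /= le_Mn; rewrite series_exp_coeff1.
rewrite (@big_cat_nat _ _ _ M 0 n _ _ (leq0n M) le_Mn) /= lerDl.
by apply: sumr_ge0 => j _; rewrite invr_ge0 ler0n.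
Qed.

Lemma inv_fact_addS_le M j :
  ((M.+1 + j)`!%:R : R)^-1 <= (M`!%:R)^-1 * (M.+1%:R^-1) ^+ j.+1.
Proof.
rewrite exprVn -invfM -natrX -natrM.
by rewrite lef_pV2 ?posrE ?ltr0n ?muln_gt0 ?expn_gt0 ?fact_gt0 // ler_nat fact_mul_expS_le.
Qed.

(* The geometric majorant of the tail is carried along as an invariant. *)
Lemma sum_inv_fact_tail_le M J : (0 < M)%N ->
  \sum_(M.+1 <= j < M.+1 + J) (j`!%:R : R)^-1
    + (M`!%:R)^-1 * (M.+1%:R^-1) ^+ J / M%:R <= (M`!%:R)^-1 / M%:R.
Proof.
move=> M_gt0; elim: J => [|J IHJ].
  by rewrite addn0 big_geq // add0r expr0 mulr1.
rewrite addnS big_nat_recr /= ?leq_addr //; apply: le_trans IHJ.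
rewrite -addrA lerD2l.
have geom (a m : R) : 0 < m ->
    a * (m + 1)^-1 ^+ J.+1 + a * (m + 1)^-1 ^+ J.+1 / m = a * (m + 1)^-1 ^+ J / m.
  by move=> m_gt0; rewrite exprS; field; rewrite ?gt_eqF // ltr_wpDr.
by rewrite -natr1 -geom ?ltr0n // lerD2r natr1 inv_fact_addS_le.
Qed.

Lemma expR1_le_sum_inv_fact M : (0 < M)%N ->
  expR 1 <= \sum_(0 <= j < M.+1) (j`!%:R : R)^-1 + (M`!%:R)^-1 / M%:R.
Proof.
move=> M_gt0; apply: limr_le; first exact: is_cvg_series_exp_coeff.
exists M.+1 => // n /= le_Mn; rewrite series_exp_coeff1 -(subnKC le_Mn).
rewrite (@big_cat_nat _ _ _ M.+1 0 _ _ _ (leq0n M.+1) (leq_addr _ _)) /= lerD2l.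
apply: le_trans (sum_inv_fact_tail_le M (n - M.+1) M_gt0); rewrite lerDl.
by rewrite !mulr_ge0 ?exprn_ge0 ?invr_ge0 ?ler0n.
Qed.

(* [N] is [M! * \sum_(j <= M) 1/j!]; the rest of [M! e] is the tail
   [1/(M+1) + 1/((M+1)(M+2)) + ...], which lies in [(1/(M+1), 1/M]]. *)
Lemma fact_mul_expR1_bounds M : (2 <= M)%N -> exists N : int,
  N%:~R + (M.+1%:R : R)^-1 < M`!%:R * expR 1 < N%:~R + 1 - (M.+1%:R : R)^-1.
Proof.
move=> M_ge2; have M_gt0 : (0 < M)%N by apply: leq_trans M_ge2.
have fact_gt0R j : (0 : R) < j`!%:R by rewrite ltr0n fact_gt0.
set S := \sum_(0 <= j < M.+1) (j`!%:R : R)^-1.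
exists (\sum_(0 <= j < M.+1) M`! %/ j`!)%N.
rewrite -[_%:~R]/(_%:R).
have -> : (\sum_(0 <= j < M.+1) M`! %/ j`!)%N%:R = M`!%:R * S.
  rewrite natr_sum big_distrr; apply: eq_big_nat => j /andP[_ lt_jM].
  rewrite natr_div ?unitfE ?gt_eqF //.
  by rewrite (fact_split (ltnSE lt_jM)) dvdn_mulr.
apply/andP; split.
- have := sum_inv_fact_le_expR1 M.+3.
  rewrite big_nat_recr //= big_nat_recr //= -/S => le_e.
  apply: lt_le_trans (ler_wpM2l (ltW (fact_gt0R M)) le_e).
  rewrite !mulrDr -addrA ltrD2l.
  have -> : M`!%:R * (M.+1`!%:R)^-1 = (M.+1%:R : R)^-1.
    by rewrite factS natrM invfM mulrCA divff ?gt_eqF ?mulr1.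
  by rewrite ltrDl mulr_gt0 ?invr_gt0.
- apply: le_lt_trans (ler_wpM2l (ltW (fact_gt0R M)) (expR1_le_sum_inv_fact M M_gt0)) _.
  rewrite mulrDr mulrA divff ?gt_eqF ?mul1r // -addrA ltrD2l.
  have invM_le : (M%:R : R)^-1 <= 2^-1.
    by rewrite lef_pV2 ?posrE ?ltr0n ?ler_nat // ltnW.
  have invMS_le : (M.+1%:R : R)^-1 <= 3^-1.
    by rewrite lef_pV2 ?posrE ?ltr0n ?ler_nat.
  apply: le_lt_trans invM_le _; apply: (@lt_le_trans _ _ (1 - 3^-1)); first lra.
  by rewrite lerD2l lerN2.
Qed.

Lemma inv_lt_dist_fact_mul_expR1 M (z : int) : (2 <= M)%N ->
  (M.+1%:R : R)^-1 < `|M`!%:R * expR 1 - z%:~R|.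
Proof.
move=> M_ge2; have [N bounds] := fact_mul_expR1_bounds M M_ge2.
by apply: lt_dist_int bounds; rewrite invr_ge0 ler0n.
Qed.

Lemma inv_lt_dist_dvd_fact M (q : nat) (p : int) : (2 <= M)%N -> (q %| M`!)%N ->
  (M.+1%:R : R)^-1 < (M`! %/ q)%:R * `|q%:R * expR 1 - p%:~R|.
Proof.
move=> M_ge2 q_dvd; have := inv_lt_dist_fact_mul_expR1 M ((M`! %/ q)%:Z * p) M_ge2.
rewrite -{1}(divnK q_dvd) natrM rmorphM /= -mulrA -mulrBr normrM.
by rewrite ger0_norm ?ler0n.
Qed.

Lemma expR1_irrational : irrational (expR (1 : R)).
Proof.
move=> [r _ er]; set d := `|denq r|%N.
have dr : denq r = d%:Z by rewrite /d absz_denq.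
have d_dvd : (d %| d.+2`!)%N by rewrite dvdn_fact // absz_gt0 denq_neq0 /= ltnW.
have := inv_lt_dist_dvd_fact d.+2 d (numq r) isT d_dvd.
have -> : d%:R * expR 1 - (numq r)%:~R = 0 :> R.
  rewrite -er /ratr dr -[(d%:Z)%:~R]/(d%:R : R).
  by rewrite mulrC divfK ?subrr // pnatr_eq0 -lt0n absz_gt0 denq_neq0.
by rewrite normr0 mulr0 ltNge ltW // invr_gt0 ltr0n.
Qed.

Lemma sqr_lt_fact_of_approx M (q : nat) (p : int) : (2 <= M)%N -> (0 < q)%N ->
  (q %| M`!)%N -> `|q%:R * expR (1 : R) - p%:~R| < q%:R^-1 -> (q ^ 2 < M.+1`!)%N.
Proof.
move=> M_ge2 q_gt0 q_dvd approx.
have := inv_lt_dist_dvd_fact M q p M_ge2 q_dvd.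
set L := (M`! %/ q)%N => lt_dist.
have q_gt0R : (0 : R) < q%:R by rewrite ltr0n.
have lt_L : (M.+1%:R : R)^-1 < L%:R / q%:R.
  by apply: lt_le_trans lt_dist _; rewrite ler_wpM2l ?ler0n ?ltW.
have q_lt : q%:R < M.+1%:R * L%:R :> R.
  have := lt_L; rewrite -(ltr_pM2r (_ : 0 < M.+1%:R * q%:R)) ?mulr_gt0 ?ltr0n //.
  rewrite mulKf ?pnatr_eq0 //; congr (_ < _); field.
  by rewrite pnatr_eq0 -lt0n.
rewrite -(ltr_nat R) factS -(divnK q_dvd) -/L !natrM.
by rewrite mulrA ltr_pM2r.
Qed.

Lemma expR1_ge_8div3 : 8 / 3 <= expR (1 : R).
Proof.
apply: le_trans (sum_inv_fact_le_expR1 4).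
rewrite !big_nat_recr //= big_geq // !factS fact0 /=; lra.
Qed.

Lemma pow_1Dinv_le_expR1 n : (0 < n)%N -> (1 + n%:R^-1) ^+ n <= expR (1 : R).
Proof.
move=> n_gt0; have -> : expR (1 : R) = expR (n%:R^-1) ^+ n.
  by rewrite -expRM_natl mulfV // pnatr_eq0 -lt0n.
rewrite lerXn2r ?nnegrE ?expR_ge0 ?addr_ge0 ?invr_ge0 ?ler0n //.
exact: expR_ge1Dx.
Qed.

Lemma expn_le_fact_mul_expR1 n : (0 < n)%N ->
  n%:R ^+ n <= n`!%:R * expR (1 : R) ^+ n.-1.
Proof.
elim: n => // [[_ _|n IHn _]]; first by rewrite expr0 mulr1 expr1.
rewrite /= factS natrM exprS -mulrA ler_pM2l ?ltr0n //.
have -> : n.+2%:R ^+ n.+1 = n.+1%:R ^+ n.+1 * (1 + n.+1%:R^-1) ^+ n.+1 :> R.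
  by rewrite -exprMn mulrDr mulr1 mulfV ?pnatr_eq0 // -natr1.
rewrite [expR 1 ^+ _]exprSr mulrA ler_pM ?exprn_ge0 ?addr_ge0 ?invr_ge0 ?ler0n //.
  exact: IHn.
exact: pow_1Dinv_le_expR1.
Qed.

Lemma ratio_ge_expR1 n k : (0 < k)%N -> expR (1 : R) <= n%:R / k%:R ->
  (8 * k <= 3 * n)%N.
Proof.
move=> k_gt0 le_e; have := le_trans expR1_ge_8div3 le_e.
rewrite ler_pdivlMr ?ltr0n // -(ler_nat R) !natrM => h; lra.
Qed.

Lemma fact_ge_mul_expn n k : (0 < n)%N -> (0 < k)%N ->
  expR (1 : R) <= n%:R / k%:R -> (n * k ^ n.-1 <= n`!)%N.
Proof.
move=> n_gt0 k_gt0 le_e; rewrite -(ler_nat R) natrM natrX.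
have N_gt0 : (0 : R) < n%:R ^+ n.-1 by rewrite exprn_gt0 ?ltr0n.
have K_gt0 : (0 : R) < k%:R ^+ n.-1 by rewrite exprn_gt0 ?ltr0n.
have le_pow : expR (1 : R) ^+ n.-1 <= (n%:R / k%:R) ^+ n.-1.
  by apply: lerXn2r; rewrite ?nnegrE ?expR_ge0 ?divr_ge0 ?ler0n.
rewrite expr_div_n in le_pow.
have := le_trans (expn_le_fact_mul_expR1 n n_gt0) (ler_wpM2l (ler0n _ _) le_pow).
have -> : n%:R ^+ n = n%:R * n%:R ^+ n.-1 :> R by rewrite -exprS prednK.
rewrite mulrA ler_pdivlMr //.
by rewrite -(ler_pM2r N_gt0) mulrAC.
Qed.

Lemma sqr_add1_le_pow_8div3 k : (4 <= k)%N -> k%:R ^+ 2 + 1 <= (8 / 3 : R) ^+ k.-1.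
Proof.
elim: k => // k IHk; rewrite leq_eqVlt => /orP[/eqP <- | ].
  by rewrite /= !exprS expr0; lra.
rewrite ltnS => k_ge4; have := IHk k_ge4.
have k_geR : (4 : R) <= k%:R by rewrite (ler_nat R 4).
have k_gt0 : (0 < k)%N by apply: leq_trans k_ge4.
have -> : (8 / 3 : R) ^+ k.+1.-1 = 8 / 3 * (8 / 3) ^+ k.-1 by rewrite -exprS prednK.
rewrite -natr1 => IH; nra.
Qed.

Lemma mul_expn_le_expn n k : (4 <= k)%N -> expR (1 : R) <= n%:R / k%:R ->
  ((n * k).+1 * k ^ k <= n ^ k)%N.
Proof.
move=> k_ge4 le_e; have k_gt0 : (0 < k)%N by apply: leq_trans k_ge4.
set t := n%:R / k%:R in le_e.
have nE : n%:R = t * k%:R by rewrite /t divfK // pnatr_eq0 -lt0n.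
have t_ge : 8 / 3 <= t := le_trans expR1_ge_8div3 le_e.
have pow_ge : k%:R ^+ 2 + 1 <= t ^+ k.-1.
  apply: le_trans (sqr_add1_le_pow_8div3 k k_ge4) _.
  by apply: lerXn2r; rewrite ?nnegrE //; lra.
rewrite -(ler_nat R) natrM !natrX -natr1 natrM nE exprMn ler_pM2r ?exprn_gt0 ?ltr0n //.
rewrite -(prednK k_gt0) exprS (prednK k_gt0); nra.
Qed.

Lemma fact_expn_lower n k : (0 < k)%N -> expR (1 : R) <= n%:R / k%:R ->
  ((n * k).+1 * k ^ (n * k) <= n`! ^ k)%N.
Proof.
move=> k_gt0 le_e; have ratio := ratio_ge_expR1 n k k_gt0 le_e.
case: k k_gt0 le_e ratio => [//|[|[|[|k]]]] _ le_e ratio.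
- apply: (fact_expn_lower_from 1 3) => [|i i_ge|]; [by rewrite !factS fact0 | nia | lia].
- apply: (fact_expn_lower_from 2 6) => [|i i_ge|]; [by rewrite !factS fact0 | nia | lia].
- apply: (fact_expn_lower_from 3 8) => [|i i_ge|]; [rewrite !factS fact0; lia | nia | lia].
set K := k.+4; have n_gt0 : (0 < n)%N by lia.
have -> : (K ^ (n * K) = K ^ K * K ^ (n.-1 * K))%N.
  by rewrite -expnD -mulSn prednK.
rewrite mulnA; apply: leq_trans (leq_mul (mul_expn_le_expn n K isT le_e) (leqnn _)) _.
rewrite mulnC expnM -expnMn mulnC leq_exp2r //.
exact: fact_ge_mul_expn.
Qed.

Lemma fact_mulS_le_sqr n k : (0 < k)%N -> expR (1 : R) <= n%:R / k%:R ->
  ((n * k).+1`! <= (n`! ^ k) ^ 2)%N.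
Proof.
move=> k_gt0 le_e; have n_gt0 : (0 < n)%N.
  by have := ratio_ge_expR1 n k k_gt0 le_e; lia.
rewrite factS expnS expn1.
apply: leq_trans (leq_mul (leqnn _) (fact_mul_le n k n_gt0)) _.
by rewrite mulnA leq_mul2r fact_expn_lower ?orbT.
Qed.

End ExpOne.

Theorem proposition4p1 (R : realType) (m n k : nat) :
  (0 < k)%N ->
  denq (convergent (expR (1 : R)) m) = ((n`! ^ k)%N)%:Z ->
  (n%:R / k%:R : R) < expR (1 : R).
Proof.
move=> k_gt0 den_conv; rewrite ltNge; apply/negP => le_e.
have n_ge3 : (3 <= n)%N by have := ratio_ge_expR1 R n k k_gt0 le_e; lia.
have [p [q [q_gt0 den_q approx]]] := convergent_approx R m _ (expR1_irrational R).
have qE : q = (n`! ^ k)%N by rewrite -den_q den_conv.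
rewrite qE in q_gt0 approx.
have M_ge2 : (2 <= n * k)%N by nia.
have := sqr_lt_fact_of_approx R (n * k) _ p M_ge2 q_gt0 (expn_fact_dvd_fact_mul n k) approx.
by rewrite ltnNge (fact_mulS_le_sqr R n k k_gt0 le_e).
Qed.
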